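(* Let $\mathbf{L}$ be an intermediate propositional logic and $\mathbf{QL}$ a first-order extension of $\mathbf{L}$ preserved under shadow. If $A_1,\dots,A_n\vdash_{\varepsilon\tau^+(\mathbf{QL})}B$, then $A_1^s,\dots,A_n^s\vdash_{\mathbf{L}}B^s$. This also holds if identity axioms are present.
   Context: $\varepsilon\tau$-terms: $\varepsilon x\,A(x)$, $\tau x\,A(x)$ for any formula $A(x)$. Critical formulas: $A(t)\to A(\varepsilon x\,A(x))$ and $A(\tau x\,A(x))\to A(t)$. $\Gamma\vdash_{\varepsilon\tau^+(\mathbf{QL})}B$: $B$ derivable in $\mathbf{QL}$ (axioms, modus ponens, quantifier rules) in the first-order language with quantifiers and $\varepsilon\tau$-terms from $\Gamma$ and critical formulas. Shadow: $P(t_1,\dots,t_n)^s=X_P$ (a propositional variable depending only on $P$), $(t_1=t_2)^s=\top$ (a theorem of $\mathbf{L}$), $^s$ commutes with $\land,\lor,\to,\lnot$, $(\exists x\,A(x))^s=(\forall x\,A(x))^s=A(x)^s$. $\mathbf{QL}$ is preserved under shadow if $\vdash_{\mathbf{L}}A^s$ for every quantifier axiom $A$ of $\mathbf{QL}$, and for every rule $A_1,\dots,A_n\vdash_{\mathbf{QL}}B$ of $\mathbf{QL}$, $A_1^s,\dots,A_n^s\vdash_{\mathbf{L}}B^s$. *)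

From Stdlib Require Import List.
Import ListNotations.

Inductive pform : Type :=
| PVar : nat -> pform
| PBot : pform
| PAnd : pform -> pform -> pform
| POr  : pform -> pform -> pform
| PImp : pform -> pform -> pform.

Definition PNot (A : pform) : pform := PImp A PBot.
(** [PTop] : the fixed theorem of L used as shadow of identities. *)
Definition PTop : pform := PImp PBot PBot.

Fixpoint psubst (s : nat -> pform) (A : pform) : pform :=
  match A with
  | PVar n => s n
  | PBot => PBot
  | PAnd A B => PAnd (psubst s A) (psubst s B)
  | POr A B => POr (psubst s A) (psubst s B)
  | PImp A B => PImp (psubst s A) (psubst s B)
  end.

Inductive IntThm : pform -> Prop :=
| int_K A B : IntThm (PImp A (PImp B A))
| int_S A B C : IntThm (PImp (PImp A (PImp B C)) (PImp (PImp A B) (PImp A C)))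
| int_and1 A B : IntThm (PImp (PAnd A B) A)
| int_and2 A B : IntThm (PImp (PAnd A B) B)
| int_andI A B : IntThm (PImp A (PImp B (PAnd A B)))
| int_or1 A B : IntThm (PImp A (POr A B))
| int_or2 A B : IntThm (PImp B (POr A B))
| int_orE A B C : IntThm (PImp (PImp A C) (PImp (PImp B C) (PImp (POr A B) C)))
| int_efq A : IntThm (PImp PBot A)
| int_mp A B : IntThm (PImp A B) -> IntThm A -> IntThm B.

Fixpoint peval (v : nat -> bool) (A : pform) : bool :=
  match A with
  | PVar n => v n
  | PBot => false
  | PAnd A B => andb (peval v A) (peval v B)
  | POr A B => orb (peval v A) (peval v B)
  | PImp A B => orb (negb (peval v A)) (peval v B)
  end.

Definition Taut (A : pform) : Prop := forall v, peval v A = true.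

Definition intermediate (L : pform -> Prop) : Prop :=
  (forall A, IntThm A -> L A) /\
  (forall A, L A -> Taut A) /\
  (forall A B, L (PImp A B) -> L A -> L B) /\
  (forall s A, L A -> L (psubst s A)).

Inductive PDeriv (L : pform -> Prop) (G : list pform) : pform -> Prop :=
| pd_hyp A : In A G -> PDeriv L G A
| pd_ax A : L A -> PDeriv L G A
| pd_mp A B : PDeriv L G (PImp A B) -> PDeriv L G A -> PDeriv L G B.

(** * First-order language with epsilon and tau terms (de Bruijn indices).
    [FEx A], [FAll A], [TEps A], [TTau A] bind index 0 in [A]. *)

Inductive term : Type :=
| TVar : nat -> term
| TFun : nat -> list term -> term
| TEps : fform -> term
| TTau : fform -> term
with fform : Type :=
| FPred : nat -> list term -> fform
| FEq : term -> term -> fform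
| FBot : fform
| FAnd : fform -> fform -> fform
| FOr : fform -> fform -> fform
| FImp : fform -> fform -> fform
| FNot : fform -> fform
| FEx : fform -> fform
| FAll : fform -> fform.

Definition upren (xi : nat -> nat) : nat -> nat :=
  fun n => match n with 0 => 0 | S m => S (xi m) end.

Fixpoint tren (xi : nat -> nat) (t : term) : term :=
  match t with
  | TVar n => TVar (xi n)
  | TFun f ts => TFun f (map (tren xi) ts)
  | TEps A => TEps (fren (upren xi) A)
  | TTau A => TTau (fren (upren xi) A)
  end
with fren (xi : nat -> nat) (A : fform) : fform :=
  match A with
  | FPred p ts => FPred p (map (tren xi) ts)
  | FEq t u => FEq (tren xi t) (tren xi u)
  | FBot => FBot
  | FAnd A B => FAnd (fren xi A) (fren xi B)
  | FOr A B => FOr (fren xi A) (fren xi B)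
  | FImp A B => FImp (fren xi A) (fren xi B)
  | FNot A => FNot (fren xi A)
  | FEx A => FEx (fren (upren xi) A)
  | FAll A => FAll (fren (upren xi) A)
  end.

Definition upsub (s : nat -> term) : nat -> term :=
  fun n => match n with 0 => TVar 0 | S m => tren S (s m) end.

Fixpoint tsubst (s : nat -> term) (t : term) : term :=
  match t with
  | TVar n => s n
  | TFun f ts => TFun f (map (tsubst s) ts)
  | TEps A => TEps (fsubst (upsub s) A)
  | TTau A => TTau (fsubst (upsub s) A)
  end
with fsubst (s : nat -> term) (A : fform) : fform :=
  match A with
  | FPred p ts => FPred p (map (tsubst s) ts)
  | FEq t u => FEq (tsubst s t) (tsubst s u)
  | FBot => FBot
  | FAnd A B => FAnd (fsubst s A) (fsubst s B)
  | FOr A B => FOr (fsubst s A) (fsubst s B)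
  | FImp A B => FImp (fsubst s A) (fsubst s B)
  | FNot A => FNot (fsubst s A)
  | FEx A => FEx (fsubst (upsub s) A)
  | FAll A => FAll (fsubst (upsub s) A)
  end.

(** [inst A t] is A(t), where A = A(x) has x as bound index 0. *)
Definition inst (A : fform) (t : term) : fform :=
  fsubst (fun n => match n with 0 => t | S m => TVar m end) A.

Inductive critical : fform -> Prop :=
| crit_eps A t : critical (FImp (inst A t) (inst A (TEps A)))
| crit_tau A t : critical (FImp (inst A (TTau A)) (inst A t)).

Inductive identity_axiom : fform -> Prop :=
| id_refl t : identity_axiom (FEq t t)
| id_subst A t u : identity_axiom (FImp (FEq t u) (FImp (inst A t) (inst A u))).

Fixpoint pinst (s : nat -> fform) (A : pform) : fform :=
  match A with
  | PVar n => s n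
  | PBot => FBot
  | PAnd A B => FAnd (pinst s A) (pinst s B)
  | POr A B => FOr (pinst s A) (pinst s B)
  | PImp A B => FImp (pinst s A) (pinst s B)
  end.

(** Derivability [G |-_{et^+(QL)} B] in the first-order extension QL of L
    whose quantifier axioms are [qax] and whose quantifier rules are [qrule]
    (a rule instance: list of premises, conclusion); its propositional
    axioms are all first-order instances of theorems of L; extra axioms:
    critical formulas and (if [ident] = true) identity axioms. *)
Inductive ETDeriv (L : pform -> Prop) (qax : fform -> Prop)
    (qrule : list fform -> fform -> Prop) (ident : bool) (G : list fform)
  : fform -> Prop :=
| et_hyp A : In A G -> ETDeriv L qax qrule ident G A
| et_prop s A : L A -> ETDeriv L qax qrule ident G (pinst s A)
| et_qax A : qax A -> ETDeriv L qax qrule ident G A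
| et_crit A : critical A -> ETDeriv L qax qrule ident G A
| et_ident A : ident = true -> identity_axiom A -> ETDeriv L qax qrule ident G A
| et_mp A B : ETDeriv L qax qrule ident G (FImp A B) ->
    ETDeriv L qax qrule ident G A -> ETDeriv L qax qrule ident G B
| et_rule prems B : qrule prems B ->
    (forall P, In P prems -> ETDeriv L qax qrule ident G P) ->
    ETDeriv L qax qrule ident G B.

Fixpoint shadow (A : fform) : pform :=
  match A with
  | FPred p _ => PVar p
  | FEq _ _ => PTop
  | FBot => PBot
  | FAnd A B => PAnd (shadow A) (shadow B)
  | FOr A B => POr (shadow A) (shadow B)
  | FImp A B => PImp (shadow A) (shadow B)
  | FNot A => PNot (shadow A)
  | FEx A => shadow A
  | FAll A => shadow A
  end.

Definition preserved_under_shadow (L : pform -> Prop) (qax : fform -> Prop)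
    (qrule : list fform -> fform -> Prop) : Prop :=
  (forall A, qax A -> PDeriv L [] (shadow A)) /\
  (forall prems B, qrule prems B -> PDeriv L (map shadow prems) (shadow B)).

(* The shadow forgets terms and quantifiers, so [A(t)] and [A(x)] have the same
   shadow.  Hence every critical formula and every identity axiom becomes an
   intuitionistic tautology ([A^s -> A^s], [T], [T -> A^s -> A^s]), a first-order
   instance of a theorem of L becomes a propositional substitution instance of it,
   and the quantifier axioms and rules are handled by preservation under shadow;
   induction on the derivation then translates it step by step. *)

From Stdlib Require Import List.

Lemma shadow_fsubst (A : fform) (s : nat -> term) : shadow (fsubst s A) = shadow A.
Proof.
  revert s; induction A; intros s; simpl; try reflexivity.
  all: try (rewrite IHA1, IHA2; reflexivity).
  all: rewrite IHA; reflexivity.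
Qed.

Lemma shadow_inst (A : fform) (t : term) : shadow (inst A t) = shadow A.
Proof. apply shadow_fsubst. Qed.

Lemma shadow_pinst (s : nat -> fform) (A : pform) :
  shadow (pinst s A) = psubst (fun n => shadow (s n)) A.
Proof.
  induction A; simpl; try reflexivity.
  all: rewrite IHA1, IHA2; reflexivity.
Qed.

Lemma IntThm_imp_refl (A : pform) : IntThm (PImp A A).
Proof.
  apply (int_mp _ _ (int_mp _ _ (int_S A (PImp A A) A) (int_K A (PImp A A)))).
  apply int_K.
Qed.

Lemma critical_shadow_IntThm (A : fform) : critical A -> IntThm (shadow A).
Proof.
  intros []; simpl; rewrite !shadow_inst; apply IntThm_imp_refl.
Qed.

Lemma identity_axiom_shadow_IntThm (A : fform) : identity_axiom A -> IntThm (shadow A).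
Proof.
  intros [t | P t u]; simpl.
  - apply int_efq.
  - rewrite !shadow_inst.
    apply (int_mp _ _ (int_K _ _)), IntThm_imp_refl.
Qed.

Lemma PDeriv_cut (L : pform -> Prop) (H G : list pform) (C : pform) :
  PDeriv L H C -> (forall P, In P H -> PDeriv L G P) -> PDeriv L G C.
Proof.
  intros D HG; induction D.
  - apply HG; assumption.
  - apply pd_ax; assumption.
  - eapply pd_mp; eassumption.
Qed.

Section Shadow.

Variable L : pform -> Prop.
Hypothesis L_IntThm : forall A, IntThm A -> L A.
Hypothesis L_psubst : forall s A, L A -> L (psubst s A).

Variables (qax : fform -> Prop) (qrule : list fform -> fform -> Prop).
Hypothesis qax_shadow : forall A, qax A -> PDeriv L nil (shadow A).
Hypothesis qrule_shadow :
  forall prems B, qrule prems B -> PDeriv L (map shadow prems) (shadow B).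

Lemma ETDeriv_shadow (ident : bool) (G : list fform) (B : fform) :
  ETDeriv L qax qrule ident G B -> PDeriv L (map shadow G) (shadow B).
Proof.
  intros D.
  induction D as [A HA | s A HA | A HA | A HA | A _ HA | A C _ IHimp _ IHA
                 | prems C Hrule _ IHprems].
  - apply pd_hyp, in_map; assumption.
  - rewrite shadow_pinst; apply pd_ax, L_psubst; assumption.
  - apply (PDeriv_cut L nil); [apply qax_shadow; assumption | intros P []].
  - apply pd_ax, L_IntThm, critical_shadow_IntThm; assumption.
  - apply pd_ax, L_IntThm, identity_axiom_shadow_IntThm; assumption.
  - eapply pd_mp; eassumption.
  - apply (PDeriv_cut L (map shadow prems)); [apply qrule_shadow; assumption |].
    intros P HP; apply in_map_iff in HP; destruct HP as [Q [<- HQ]].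
    apply IHprems; assumption.
Qed.

End Shadow.

Theorem mainTheorem15 (L : pform -> Prop) (qax : fform -> Prop)
    (qrule : list fform -> fform -> Prop) (ident : bool)
    (As : list fform) (B : fform) :
  intermediate L ->
  preserved_under_shadow L qax qrule ->
  ETDeriv L qax qrule ident As B ->
  PDeriv L (map shadow As) (shadow B).
Proof.
  intros [L_IntThm [_ [_ L_psubst]]] [qax_shadow qrule_shadow].
  apply ETDeriv_shadow; assumption.
Qed.
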